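(* If $G$ is a geometric strongly regular graph, then $G$ is integrable.
   Context: A strongly regular graph with parameters $(v,k,\lambda,\mu)$ is a $k$-regular graph on $v$ vertices in which adjacent vertices have $\lambda$ common neighbours and distinct nonadjacent vertices have $\mu$ common neighbours. Let $\theta_{\min}(G)$ be the smallest eigenvalue of the adjacency matrix $A(G)$. Every clique of $G$ has at most $1-\frac{k}{\theta_{\min}(G)}$ vertices; a clique with exactly this many vertices is called a Delsarte clique. $G$ is geometric if there is a set $\mathcal{C}$ of Delsarte cliques of $G$ such that every pair of adjacent vertices lies in exactly one clique of $\mathcal{C}$. A graph $G$ is integrable if there is an integral matrix $N$ with $A(G)-\lfloor\theta_{\min}(G)\rfloor I=N^TN$. *)

From mathcomp Require Import all_boot all_order all_algebra all_field.
Set Implicit Arguments. Unset Strict Implicit. Unset Printing Implicit Defensive.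
Import Order.TTheory GRing.Theory Num.Theory.
Local Open Scope ring_scope.

Definition simple_graph (n : nat) (e : rel 'I_n) : Prop :=
  (forall x y, e x y = e y x) /\ (forall x, ~~ e x x).

Definition adjmx (R : nzRingType) (n : nat) (e : rel 'I_n) : 'M[R]_n :=
  \matrix_(i, j) (e i j)%:R.

Definition srg (n : nat) (e : rel 'I_n) (v k lam mu : nat) : Prop :=
  [/\ simple_graph e, n = v,
      forall x, #|[set y | e x y]| = k,
      forall x y, e x y -> #|[set z | e x z && e y z]| = lam &
      forall x y, x != y -> ~~ e x y -> #|[set z | e x z && e y z]| = mu].

Definition is_srg (n : nat) (e : rel 'I_n) : Prop :=
  exists v k lam mu, srg e v k lam mu.

(* theta is the smallest eigenvalue of A(G) (computed over algC;
   all eigenvalues of the symmetric real matrix A(G) are real). *)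
Definition is_min_eigenvalue (n : nat) (e : rel 'I_n) (theta : algC) : Prop :=
  eigenvalue (adjmx algC e) theta /\
  forall a, eigenvalue (adjmx algC e) a -> theta <= a.

Definition is_clique (n : nat) (e : rel 'I_n) (C : {set 'I_n}) : Prop :=
  forall x y, x \in C -> y \in C -> x != y -> e x y.

Definition delsarte_clique (n : nat) (e : rel 'I_n) (k : nat) (theta : algC)
    (C : {set 'I_n}) : Prop :=
  is_clique e C /\ (#|C|%:R : algC) = 1 - k%:R / theta.

Definition geometric (n : nat) (e : rel 'I_n) : Prop :=
  exists k, (forall x, #|[set y | e x y]| = k) /\
  forall theta, is_min_eigenvalue e theta ->
  exists CC : {set {set 'I_n}},
    (forall C, C \in CC -> delsarte_clique e k theta C) /\
    (forall x y, e x y -> #|[set C in CC | (x \in C) && (y \in C)]| = 1%N).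

Definition integrable (n : nat) (e : rel 'I_n) : Prop :=
  forall theta, is_min_eigenvalue e theta ->
  exists (m : nat) (N : 'M[int]_(m, n)),
    adjmx int e - (Num.floor theta)%:M = N^T *m N.

From mathcomp Require Import all_boot all_order all_algebra all_field.
From mathcomp Require Import ring.

Set Implicit Arguments.
Unset Strict Implicit.
Unset Printing Implicit Defensive.

Import GRing.Theory Num.Theory.
Local Open Scope ring_scope.

(* Let N be the clique-vertex incidence matrix of the geometry. As every edge
   lies in exactly one clique, N^T N agrees with A off the diagonal, and its
   diagonal entry at x is the number r_x of cliques through x. Counting the k
   neighbours of x through these cliques, each of Delsarte size 1 - k/theta,
   gives k = r_x (-k/theta), so theta = -r_x for every x. Hence theta is an
   integer and A - floor(theta) I = A - theta I = N^T N. *)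

Lemma eigenvalue_scalar_mx (F : fieldType) (n : nat) (c a : F) :
  eigenvalue (c%:M : 'M_n) a -> a = c.
Proof.
case/eigenvalueP=> v; rewrite mul_mx_scalar => /eqP.
rewrite eq_sym -subr_eq0 -scalerBl.
by rewrite scaler_eq0 subr_eq0 => /orP[/eqP | /eqP ->]; last rewrite eqxx.
Qed.

Lemma adjmx_eq0 (R : nzRingType) (n : nat) (e : rel 'I_n) :
  (forall x, #|[set y | e x y]| = 0%N) -> adjmx R e = 0.
Proof.
move=> deg0; apply/matrixP=> x y; rewrite !mxE.
have /setP/(_ y) := cards0_eq (deg0 x).
by rewrite !inE => ->.
Qed.

Section EdgeCliquePartition.

Variables (n : nat) (e : rel 'I_n) (CC : {set {set 'I_n}}).
Hypothesis CC_cliques : forall C, C \in CC -> is_clique e C.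
Hypothesis CC_partition :
  forall x y, e x y -> #|[set C in CC | (x \in C) && (y \in C)]| = 1%N.

Lemma card_cliques_through2 x y : x != y ->
  #|[set C in CC | (x \in C) && (y \in C)]| = e x y.
Proof.
move=> neq_xy; case: (boolP (e x y)) => [/CC_partition // | not_exy].
apply/eqP; rewrite cards_eq0; apply/eqP/setP=> C; rewrite !inE.
apply/negP=> /and3P[CC_C xC yC]; move/negP: not_exy; apply.
exact: (@CC_cliques C CC_C x y xC yC neq_xy).
Qed.

Lemma card_neighbours_sum_cliques x : ~~ e x x ->
  #|[set y | e x y]| = (\sum_(C in CC | x \in C) #|C :\ x|)%N.
Proof.
move=> not_exx.
rewrite -sum1_card big_mkcond /=.
under [RHS]eq_bigr do rewrite -sum1_card big_mkcond /=.
rewrite exchange_big /=; apply: eq_bigr=> y _; rewrite inE.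
have [-> | neq_yx] := eqVneq y x.
  by rewrite (negbTE not_exx) big1 // => C _; rewrite !inE eqxx.
rewrite -[LHS]/(nat_of_bool (e x y)) -card_cliques_through2 1?eq_sym //.
rewrite -sum1_card big_mkcond [RHS]big_mkcond /=.
by apply: eq_bigr=> C _; rewrite !inE neq_yx; case: (x \in C); case: (C \in CC).
Qed.

Definition incmx (R : nzRingType) : 'M[R]_(#|CC|, n) :=
  \matrix_(c < #|CC|, x < n) (x \in enum_val c : nat)%:R.

Lemma tr_incmx_mul (R : nzRingType) x y :
  ((incmx R)^T *m incmx R) x y =
  #|[set C in CC | (x \in C) && (y \in C)]|%:R.
Proof.
rewrite mxE; under eq_bigr do rewrite !mxE -natrM mulnb.
pose in_both (C : {set 'I_n}) : R := ((x \in C) && (y \in C))%:R.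
rewrite -(big_enum_val in_both) /= -natr_sum; congr _%:R.
rewrite -sum1_card big_mkcond [RHS]big_mkcond /=; apply: eq_bigr=> C _.
by rewrite !inE; case: (C \in CC).
Qed.

Lemma tr_incmx_mul_regular (R : nzRingType) (r : R) :
  (forall x, ~~ e x x) -> (forall x, #|[set C in CC | x \in C]|%:R = r) ->
  (incmx R)^T *m incmx R = adjmx R e + r%:M.
Proof.
move=> e_irr card_r; apply/matrixP=> x y; rewrite tr_incmx_mul !mxE.
have [<- | neq_xy] := eqVneq x y.
  rewrite (negbTE (e_irr x)) add0r mulr1n -(card_r x); congr _%:R.
  by apply: eq_card=> C; rewrite !inE andbb.
by rewrite card_cliques_through2 // mulr0n addr0.
Qed.

Lemma delsarte_card_cliques_through (F : numFieldType) (k : nat) (theta : F) x :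
  ~~ e x x -> #|[set y | e x y]| = k -> (0 < k)%N ->
  (forall C, C \in CC -> #|C|%:R = 1 - k%:R / theta) ->
  theta = - #|[set C in CC | x \in C]|%:R.
Proof.
move=> not_exx deg_k k_gt0 card_delsarte.
have k_neq0 : k%:R != 0 :> F by rewrite pnatr_eq0 -lt0n.
have : (k%:R : F) = - (k%:R / theta) *+ #|[set C in CC | x \in C]|.
  rewrite -{1}deg_k card_neighbours_sum_cliques // natr_sum.
  rewrite (eq_bigr (fun=> - (k%:R / theta))); last first.
    move=> C /andP[CC_C xC]; apply: (@addrI _ (x \in C : nat)%:R).
    by rewrite -natrD -cardsD1 card_delsarte // xC.
  rewrite sumr_const; congr (_ *+ _).
  by apply: eq_card=> C; rewrite !inE.
have [-> | theta_neq0] := eqVneq theta 0.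
  by rewrite invr0 mulr0 oppr0 mul0rn => /eqP; rewrite (negbTE k_neq0).
rewrite -[_ *+ #|_|]mulr_natr => k_eq; apply: (mulfI k_neq0).
by rewrite {1}k_eq; field.
Qed.

End EdgeCliquePartition.

Theorem lemma4p2 (n : nat) (e : rel 'I_n) :
  is_srg e -> geometric e -> integrable e.
Proof.
move=> [_ [_ [_ [_ [[_ e_irr] _ _ _ _]]]]] [k [deg_k geo]] theta min_theta.
have [CC [delsarte partition]] := geo theta min_theta.
have CC_cliques C : C \in CC -> is_clique e C by move/delsarte=> [].
(* For k = 0 singletons are Delsarte cliques (as k/theta = 0), so the count
   below says nothing about theta; but then A = 0. *)
have [k0 | k_gt0] := posnP k.
  have adj0 R : adjmx R e = 0 by apply: adjmx_eq0=> x; rewrite deg_k k0.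
  have theta0 : theta = 0.
    apply: (@eigenvalue_scalar_mx _ n); rewrite raddf0 -(adj0 algC).
    exact: min_theta.1.
  by exists 0%N, 0; rewrite adj0 theta0 floor0 raddf0 subr0 mulmx0.
have floor_theta x : Num.floor theta = - #|[set C in CC | x \in C]|%:Z.
  have card_delsarte C : C \in CC -> #|C|%:R = 1 - k%:R / theta.
    by case/delsarte.
  rewrite (delsarte_card_cliques_through CC_cliques partition (e_irr x)
            (deg_k x) k_gt0 card_delsarte).
  by rewrite pmulrn -mulrNz intrKfloor.
exists #|CC|, (incmx CC int).
rewrite (tr_incmx_mul_regular CC_cliques partition e_irr
           (r := - Num.floor theta)) ?raddfN // => x.
by rewrite (floor_theta x) opprK natz.
Qed.
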